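(* For every set $S$, both $\mathbb{H}'_S$ and $\mathbb{H}_S$ are Elgot monads, where for $f\colon X\to T(Y\uplus X)$ (with $T=H'_S$, resp. $T=H_S$) the iteration $f^\dagger\colon X\to TY$ is the least fixpoint of the $\omega$-continuous endomap $g\mapsto[\eta,g]^\star\cdot f$ on the function space $X\to TY$ (ordered pointwise by $\sqsubseteq$).
   Context: Trajectories over $S$: pairs $\langle I,e\rangle$ with $e\colon I\to S$ and $I$ an interval $[0,d]$ ($d\in\mathbb{R}_{\ge0}$) or $[0,d)$ ($d\in\mathbb{R}_{\ge0}\cup\{\infty\}$). Let $H'_SX=\sum_{d\in\mathbb{R}_{\ge0}}S^{[0,d)}\times X\ \cup\ \sum_{d\in\mathbb{R}_{\ge0}\cup\{\infty\}}S^{[0,d)}$ and $H_SX=\sum_{d\in\mathbb{R}_{\ge0}}S^{[0,d)}\times X\ \cup\ \sum_{I}S^{I}$ with $I$ ranging over all intervals $[0,d]$ ($d\in\mathbb{R}_{\ge0}$) and $[0,d)$ ($d\in\mathbb{R}_{\ge0}\cup\{\infty\}$); elements are written $\langle I,e,x\rangle$ (first summand) and $\langle I,e\rangle$ (second summand). Concatenation: $\langle[0,d_1),e_1\rangle\frown\langle J,e_2\rangle=\langle J',\lambda t.\,\text{if }t<d_1\text{ then }e_1(t)\text{ else }e_2(t-d_1)\rangle$, $J'=[0,d_1+d_2)$ if $J=[0,d_2)$, $J'=[0,d_1+d_2]$ if $J=[0,d_2]$. Monad structure (for both $T=H'_S,H_S$): $\eta(x)=\langle\emptyset,!,x\rangle$;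 for $f\colon X\to TY$: $f^\star\langle I,e,x\rangle=\langle (I,e)\frown(J,e'),y\rangle$ if $f(x)=\langle J,e',y\rangle$, $f^\star\langle I,e,x\rangle=(I,e)\frown(J,e')$ if $f(x)=\langle J,e'\rangle$, $f^\star\langle I,e\rangle=\langle I,e\rangle$. These define monads $\mathbb{H}'_S,\mathbb{H}_S$. Order $\sqsubseteq$ on $TY$: $a\sqsubseteq b$ iff $a=b$, or $a=\langle I,e\rangle$ and $b\in\{\langle I',e'\rangle,\langle I',e',y\rangle\}$ with $I\subseteq I'$ and $e=e'|_I$. An Elgot monad is a monad $\mathbb{T}$ with an operator sending $f\colon X\to T(Y\uplus X)$ to $f^\dagger\colon X\to TY$ satisfying the standard Elgot iteration axioms: fixpoint $[\eta,f^\dagger]^\star\cdot f=f^\dagger$; naturality $g^\star\cdot f^\dagger=([T\mathsf{inl}\cdot g,\eta\cdot\mathsf{inr}]^\star\cdot f)^\dagger$; codiagonal $(T[\mathsf{id},\mathsf{inr}]\cdot f)^\dagger=(f^\dagger)^\dagger$ for $f\colon X\to T((Y\uplus X)\uplus X)$; uniformity: $f\cdot h=T(\mathsf{id}\uplus h)\cdot g$ implies $f^\dagger\cdot h=g^\dagger$. *)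

From Stdlib Require Import Reals Lra.
Open Scope R_scope.

Record nnR := mknn { nnval :> R; nnval_ge0 : 0 <= nnval }.

Definition nn0 : nnR := mknn 0 (Rle_refl 0).

Lemma nnadd_ge0 (a b : nnR) : 0 <= a + b.
Proof. destruct a as [a ha], b as [b hb]; simpl; lra. Qed.

Definition nnadd (a b : nnR) : nnR := mknn (a + b) (nnadd_ge0 a b).

Inductive ext : Type := EFin (d : nnR) | EInf.

Inductive intv : Type := ICl (d : nnR) | IOp (d : ext).

Definition inI (I : intv) (t : R) : Prop :=
  match I with
  | ICl d => 0 <= t <= d
  | IOp (EFin d) => 0 <= t < d
  | IOp EInf => 0 <= t
  end.

Definition dom (I : intv) : Type := {t : R | inI I t}.

Definition shiftE (d1 : nnR) (k : ext) : ext :=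
  match k with EFin d2 => EFin (nnadd d1 d2) | EInf => EInf end.

Definition shiftI (d1 : nnR) (J : intv) : intv :=
  match J with ICl d2 => ICl (nnadd d1 d2) | IOp k => IOp (shiftE d1 k) end.

Lemma inI_shift_ge0 d1 J t : inI (shiftI d1 J) t -> 0 <= t.
Proof. destruct J as [d2|[d2|]]; simpl; intros; lra. Qed.

Lemma inI_shift_right (d1 : nnR) J t :
  inI (shiftI d1 J) t -> ~ t < d1 -> inI J (t - d1).
Proof.
  destruct d1 as [d1 h1]; destruct J as [[d2 h2]|[[d2 h2]|]]; simpl; intros; lra.
Qed.

Definition concat_fun {S : Type} (d1 : nnR) (e1 : dom (IOp (EFin d1)) -> S)
  (J : intv) (e2 : dom J -> S) : dom (shiftI d1 J) -> S :=
  fun p =>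
    let t := proj1_sig p in
    match Rlt_dec t d1 with
    | left h => e1 (exist _ t (conj (inI_shift_ge0 d1 J t (proj2_sig p)) h))
    | right h => e2 (exist _ (t - d1) (inI_shift_right d1 J t (proj2_sig p) h))
    end.

Lemma inI_empty t : ~ inI (IOp (EFin nn0)) t.
Proof. simpl; lra. Qed.

Definition empty_fun {S : Type} : dom (IOp (EFin nn0)) -> S :=
  fun p => False_rect _ (inI_empty _ (proj2_sig p)).

Definition prefix {S : Type} (I : intv) (e : dom I -> S) (I' : intv) (e' : dom I' -> S)
  : Prop :=
  (forall t, inI I t -> inI I' t) /\
  (forall t (p : inI I t) (p' : inI I' t), e (exist _ t p) = e' (exist _ t p')).

Inductive Hp (S X : Type) : Type :=
  | HpTerm (d : nnR) (e : dom (IOp (EFin d)) -> S) (x : X)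
  | HpDiv (k : ext) (e : dom (IOp k) -> S).
Arguments HpTerm {S X}.
Arguments HpDiv {S X}.

Definition Hp_eta (S X : Type) (x : X) : Hp S X := HpTerm nn0 empty_fun x.

Definition Hp_bind (S X Y : Type) (f : X -> Hp S Y) (a : Hp S X) : Hp S Y :=
  match a with
  | HpTerm d e x =>
      match f x with
      | HpTerm d2 e2 y => HpTerm (nnadd d d2) (concat_fun d e (IOp (EFin d2)) e2) y
      | HpDiv k e2 => HpDiv (shiftE d k) (concat_fun d e (IOp k) e2)
      end
  | HpDiv k e => HpDiv k e
  end.

Definition Hp_le (S Y : Type) (a b : Hp S Y) : Prop :=
  a = b \/
  match a with
  | HpDiv k e =>
      match b with
      | HpTerm d e' _ => prefix (IOp k) e (IOp (EFin d)) e'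
      | HpDiv k' e' => prefix (IOp k) e (IOp k') e'
      end
  | HpTerm _ _ _ => False
  end.

Inductive H (S X : Type) : Type :=
  | HTerm (d : nnR) (e : dom (IOp (EFin d)) -> S) (x : X)
  | HDiv (I : intv) (e : dom I -> S).
Arguments HTerm {S X}.
Arguments HDiv {S X}.

Definition H_eta (S X : Type) (x : X) : H S X := HTerm nn0 empty_fun x.

Definition H_bind (S X Y : Type) (f : X -> H S Y) (a : H S X) : H S Y :=
  match a with
  | HTerm d e x =>
      match f x with
      | HTerm d2 e2 y => HTerm (nnadd d d2) (concat_fun d e (IOp (EFin d2)) e2) y
      | HDiv J e2 => HDiv (shiftI d J) (concat_fun d e J e2)
      end
  | HDiv I0 e => HDiv I0 e
  end.

Definition H_le (S Y : Type) (a b : H S Y) : Prop :=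
  a = b \/
  match a with
  | HDiv I0 e =>
      match b with
      | HTerm d e' _ => prefix I0 e (IOp (EFin d)) e'
      | HDiv I1 e' => prefix I0 e I1 e'
      end
  | HTerm _ _ _ => False
  end.

Definition copair {A B C : Type} (f : A -> C) (g : B -> C) (s : A + B) : C :=
  match s with inl a => f a | inr b => g b end.

Definition summap {A A' B B' : Type} (f : A -> A') (g : B -> B') (s : A + B) : A' + B' :=
  match s with inl a => inl (f a) | inr b => inr (g b) end.

Close Scope R_scope.
Section Generic.
Variable T : Type -> Type.
Variable eta : forall X, X -> T X.
Variable bind : forall X Y, (X -> T Y) -> T X -> T Y.
Variable le : forall Y, T Y -> T Y -> Prop.

Definition Tmap {A B : Type} (h : A -> B) : T A -> T B :=
  bind A B (fun a => eta B (h a)).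

Definition is_monad : Prop :=
  (forall X (a : T X), bind X X (eta X) a = a) /\
  (forall X Y (f : X -> T Y) (x : X), bind X Y f (eta X x) = f x) /\
  (forall X Y Z (f : X -> T Y) (g : Y -> T Z) (a : T X),
      bind X Z (fun x => bind Y Z g (f x)) a = bind Y Z g (bind X Y f a)).

Definition fle {X Y : Type} (g h : X -> T Y) : Prop := forall x, le Y (g x) (h x).

Definition is_chain {X Y : Type} (c : nat -> X -> T Y) : Prop :=
  forall n, fle (c n) (c (S n)).

Definition is_sup {X Y : Type} (c : nat -> X -> T Y) (g : X -> T Y) : Prop :=
  (forall n, fle (c n) g) /\ (forall h, (forall n, fle (c n) h) -> fle g h).

Definition omega_continuous {X Y : Type} (F : (X -> T Y) -> X -> T Y) : Prop :=
  (forall g h, fle g h -> fle (F g) (F h)) /\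
  (forall c g, is_chain c -> is_sup c g -> is_sup (fun n => F (c n)) (F g)).

Definition is_least_fixpoint {X Y : Type} (F : (X -> T Y) -> X -> T Y) (g : X -> T Y)
  : Prop :=
  (forall x, F g x = g x) /\ (forall h, (forall x, F h x = h x) -> fle g h).

Definition Phi {X Y : Type} (f : X -> T (Y + X)) (g : X -> T Y) : X -> T Y :=
  fun x => bind (Y + X) Y (copair (eta Y) g) (f x).

Definition elgot_axioms (dag : forall X Y, (X -> T (Y + X)) -> X -> T Y) : Prop :=
  (forall X Y (f : X -> T (Y + X)) (x : X),
      bind (Y + X) Y (copair (eta Y) (dag X Y f)) (f x) = dag X Y f x) /\
  (forall X Y Z (g : Y -> T Z) (f : X -> T (Y + X)) (x : X),
      bind Y Z g (dag X Y f x) =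
      dag X Z (fun x0 => bind (Y + X) (Z + X)
                  (copair (fun y => Tmap inl (g y)) (fun x' => eta (Z + X) (inr x')))
                  (f x0)) x) /\
  (forall X Y (f : X -> T ((Y + X) + X)) (x : X),
      dag X Y (fun x0 => Tmap (copair (fun s : Y + X => s) inr) (f x0)) x =
      dag X Y (dag X (Y + X)%type f) x) /\
  (forall X Y Z (f : X -> T (Y + X)) (g : Z -> T (Y + Z)) (h : Z -> X),
      (forall z, f (h z) = Tmap (summap (fun y : Y => y) h) (g z)) ->
      forall z, dag X Y f (h z) = dag Z Y g z).

Definition elgot_by_least_fixpoints : Prop :=
  is_monad /\
  (forall X Y (c : nat -> X -> T Y), is_chain c -> exists g, is_sup c g) /\
  (forall X Y (f : X -> T (Y + X)), omega_continuous (Phi f)) /\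
  exists dag : forall X Y, (X -> T (Y + X)) -> X -> T Y,
    (forall X Y (f : X -> T (Y + X)), is_least_fixpoint (Phi f) (dag X Y f)) /\
    elgot_axioms dag.

End Generic.

(* Both monads are strict and omega-continuous over pointed omega-cpos.  The least element
   is the empty divergent trajectory; an omega-chain either becomes constant at a terminating
   element or consists of divergent trajectories, each a prefix of the next, whose union is
   again a trajectory on an interval by completeness of R; and bind is monotone and
   continuous in both arguments.  For any such monad the Kleene iteration
   f^dagger = sup_n Phi_f^n(bot) is the least fixpoint of Phi_f; naturality and uniformity
   hold already for each Kleene approximant, and the codiagonal law follows by Park induction
   in both directions.  H'_S embeds into H_S preserving the monad structure, the order and
   suprema of chains (a union of half-open intervals [0,d) is never closed), so it inherits
   all of this. *)

From Stdlib Require Import Reals Lra PeanoNat FunctionalExtensionality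
  ClassicalEpsilon Classical ProofIrrelevance.

Section ChainOrder.
Context {A : Type} (le : A -> A -> Prop).

Definition chain (c : nat -> A) : Prop := forall n, le (c n) (c (S n)).

Definition supremum (c : nat -> A) (s : A) : Prop :=
  (forall n, le (c n) s) /\ (forall h, (forall n, le (c n) h) -> le s h).

Lemma supremum_ext (c c' : nat -> A) s :
  (forall n, c n = c' n) -> supremum c s -> supremum c' s.
Proof.
  intros E [Ub Least]. split.
  - intros n. rewrite <- E. apply Ub.
  - intros h Hh. apply Least. intros n. rewrite E. apply Hh.
Qed.

Hypothesis le_refl : forall a, le a a.
Hypothesis le_trans : forall a b c, le a b -> le b c -> le a c.
Hypothesis le_antisym : forall a b, le a b -> le b a -> a = b.

Lemma supremum_unique c s s' : supremum c s -> supremum c s' -> s = s'.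
Proof. intros [Ub Least] [Ub' Least']. apply le_antisym; auto. Qed.

Lemma supremum_const a : supremum (fun _ => a) a.
Proof. split; [intros; apply le_refl | intros h Hh; apply (Hh 0)]. Qed.

Lemma supremum_max c n : (forall m, le (c m) (c n)) -> supremum c (c n).
Proof. intros Hn. split; auto. Qed.

Lemma supremum_tail c s : chain c -> supremum (fun n => c (S n)) s -> supremum c s.
Proof.
  intros Hc [Ub Least]. split.
  - intros n. apply (le_trans _ _ _ (Hc n) (Ub n)).
  - intros h Hh. apply Least. intros n. apply Hh.
Qed.

Lemma chain_le c n m : chain c -> (n <= m)%nat -> le (c n) (c m).
Proof.
  intros Hc Hnm. induction Hnm as [|m _ IH]; [apply le_refl|].
  exact (le_trans _ _ _ IH (Hc m)).
Qed.

End ChainOrder.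

Section KleeneIteration.
Variable T : Type -> Type.
Variable eta : forall X, X -> T X.
Variable bind : forall X Y, (X -> T Y) -> T X -> T Y.
Variable le : forall Y, T Y -> T Y -> Prop.
Variable bot : forall Y, T Y.

Hypothesis bind_eta : forall X (a : T X), bind X X (eta X) a = a.
Hypothesis bind_of_eta : forall X Y (f : X -> T Y) (x : X), bind X Y f (eta X x) = f x.
Hypothesis bind_bind : forall X Y Z (f : X -> T Y) (g : Y -> T Z) (a : T X),
  bind X Z (fun x => bind Y Z g (f x)) a = bind Y Z g (bind X Y f a).

Hypothesis le_refl : forall Y (a : T Y), le Y a a.
Hypothesis le_trans : forall Y (a b c : T Y), le Y a b -> le Y b c -> le Y a c.
Hypothesis le_antisym : forall Y (a b : T Y), le Y a b -> le Y b a -> a = b.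
Hypothesis bot_le : forall Y (a : T Y), le Y (bot Y) a.
Hypothesis supremum_exists : forall Y (c : nat -> T Y),
  chain (le Y) c -> exists s, supremum (le Y) c s.

Hypothesis bind_bot : forall X Y (f : X -> T Y), bind X Y f (bot X) = bot Y.
Hypothesis bind_mono_l : forall X Y (f g : X -> T Y) a,
  (forall x, le Y (f x) (g x)) -> le Y (bind X Y f a) (bind X Y g a).
Hypothesis bind_continuous_r : forall X Y (f : X -> T Y) (c : nat -> T X) s,
  chain (le X) c -> supremum (le X) c s ->
  supremum (le Y) (fun n => bind X Y f (c n)) (bind X Y f s).
Hypothesis bind_continuous_l : forall X Y (k : nat -> X -> T Y) (K : X -> T Y) a,
  (forall x, chain (le Y) (fun n => k n x)) ->
  (forall x, supremum (le Y) (fun n => k n x) (K x)) ->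
  supremum (le Y) (fun n => bind X Y (k n) a) (bind X Y K a).

Lemma bind_Tmap X Y Z (h : X -> Y) (g : Y -> T Z) (a : T X) :
  bind Y Z g (Tmap T eta bind h a) = bind X Z (fun x => g (h x)) a.
Proof.
  unfold Tmap. rewrite <- bind_bind. f_equal.
  apply functional_extensionality. intros x. apply bind_of_eta.
Qed.

Lemma is_sup_pointwise X Y (c : nat -> X -> T Y) g :
  is_sup T le c g <-> forall x, supremum (le Y) (fun n => c n x) (g x).
Proof.
  split.
  - intros [Ub Least] x. split; [intros n; apply Ub|].
    intros b Hb.
    set (h := fun x' => if excluded_middle_informative (x' = x) then b else g x').
    assert (Hh : fle T le g h).
    { apply Least. intros n x'. unfold h.
      destruct (excluded_middle_informative (x' = x)) as [->|_]; [apply Hb | apply Ub]. }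
    specialize (Hh x). unfold h in Hh.
    destruct (excluded_middle_informative (x = x)); [exact Hh | congruence].
  - intros Hx. split.
    + intros n x. apply (proj1 (Hx x)).
    + intros h Hh x. apply (proj2 (Hx x)). intros n. apply Hh.
Qed.

Lemma is_sup_exists X Y (c : nat -> X -> T Y) : is_chain T le c -> exists g, is_sup T le c g.
Proof.
  intros Hc.
  assert (Hx : forall x, exists s, supremum (le Y) (fun n => c n x) s).
  { intros x. apply supremum_exists. intros n. apply Hc. }
  exists (fun x => proj1_sig (constructive_indefinite_description _ (Hx x))).
  apply is_sup_pointwise. intros x.
  exact (proj2_sig (constructive_indefinite_description _ (Hx x))).
Qed.

Lemma Phi_mono X Y (f : X -> T (Y + X)) g h :
  fle T le g h -> fle T le (Phi T eta bind f g) (Phi T eta bind f h).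
Proof. intros Hgh x. apply bind_mono_l. intros [y|x']; simpl; auto. Qed.

Lemma Phi_continuous X Y (f : X -> T (Y + X)) : omega_continuous T le (Phi T eta bind f).
Proof.
  split; [apply Phi_mono|].
  intros c g Hc Hs. apply is_sup_pointwise. intros x.
  apply (bind_continuous_l _ _ (fun n => copair (eta Y) (c n)) (copair (eta Y) g)).
  - intros [y|x'] n; simpl; [apply le_refl | apply Hc].
  - intros [y|x']; simpl; [apply supremum_const; auto | exact (proj1 (is_sup_pointwise _ _ _ _) Hs x')].
Qed.

Fixpoint kleene {X Y} (f : X -> T (Y + X)) (n : nat) : X -> T Y :=
  match n with
  | O => fun _ => bot Y
  | S n => Phi T eta bind f (kleene f n)
  end.

Lemma kleene_chain X Y (f : X -> T (Y + X)) : is_chain T le (kleene f).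
Proof.
  intros n. induction n as [|n IH]; simpl.
  - intros x. apply bot_le.
  - apply Phi_mono, IH.
Qed.

Definition iter X Y (f : X -> T (Y + X)) : X -> T Y :=
  proj1_sig (constructive_indefinite_description _
    (is_sup_exists X Y (kleene f) (kleene_chain X Y f))).

Lemma iter_is_sup X Y (f : X -> T (Y + X)) : is_sup T le (kleene f) (iter X Y f).
Proof. exact (proj2_sig (constructive_indefinite_description _ _)). Qed.

Lemma iter_supremum X Y (f : X -> T (Y + X)) x :
  supremum (le Y) (fun n => kleene f n x) (iter X Y f x).
Proof. exact (proj1 (is_sup_pointwise _ _ _ _) (iter_is_sup X Y f) x). Qed.

Lemma iter_fixpoint X Y (f : X -> T (Y + X)) x :
  Phi T eta bind f (iter X Y f) x = iter X Y f x.
Proof.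
  assert (Hs := proj2 (Phi_continuous X Y f) _ _ (kleene_chain X Y f) (iter_is_sup X Y f)).
  apply (supremum_unique _ (le_antisym Y) (fun n => kleene f n x)).
  - apply supremum_tail; [exact (le_trans Y) | intros n; apply kleene_chain |].
    exact (proj1 (is_sup_pointwise _ _ _ _) Hs x).
  - apply iter_supremum.
Qed.

Lemma iter_least_prefixpoint X Y (f : X -> T (Y + X)) p :
  fle T le (Phi T eta bind f p) p -> fle T le (iter X Y f) p.
Proof.
  intros Hp. apply (proj2 (iter_is_sup X Y f)). intros n.
  induction n as [|n IH]; intros x; simpl.
  - apply bot_le.
  - exact (le_trans _ _ _ _ (Phi_mono X Y f _ _ IH x) (Hp x)).
Qed.

Lemma iter_least_fixpoint X Y (f : X -> T (Y + X)) :
  is_least_fixpoint T le (Phi T eta bind f) (iter X Y f).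
Proof.
  split; [apply iter_fixpoint|].
  intros h Hh. apply iter_least_prefixpoint. intros x. rewrite Hh. apply le_refl.
Qed.

Lemma iter_naturality X Y Z (g : Y -> T Z) (f : X -> T (Y + X)) (x : X) :
  bind Y Z g (iter X Y f x) =
  iter X Z (fun x0 => bind (Y + X) (Z + X)
              (copair (fun y => Tmap T eta bind inl (g y)) (fun x' => eta (Z + X) (inr x')))
              (f x0)) x.
Proof.
  set (f' := fun x0 => bind (Y + X) (Z + X)
              (copair (fun y => Tmap T eta bind inl (g y)) (fun x' => eta (Z + X) (inr x')))
              (f x0)).
  assert (Hk : forall n x, bind Y Z g (kleene f n x) = kleene f' n x).
  { induction n as [|n IH]; intros x0; simpl; [apply bind_bot|].
    unfold Phi, f'. rewrite <- !bind_bind. f_equal.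
    apply functional_extensionality. intros [y|x']; simpl; rewrite bind_of_eta.
    - rewrite bind_Tmap. symmetry. apply bind_eta.
    - apply IH. }
  apply (supremum_unique _ (le_antisym Z) (fun n => bind Y Z g (kleene f n x))).
  - apply bind_continuous_r; [intros n; apply kleene_chain | apply iter_supremum].
  - apply (supremum_ext _ (fun n => kleene f' n x)); [intros n; symmetry; apply Hk|].
    apply iter_supremum.
Qed.

Lemma iter_uniformity X Y Z (f : X -> T (Y + X)) (g : Z -> T (Y + Z)) (h : Z -> X) :
  (forall z, f (h z) = Tmap T eta bind (summap (fun y : Y => y) h) (g z)) ->
  forall z, iter X Y f (h z) = iter Z Y g z.
Proof.
  intros Hfg.
  assert (Hk : forall n z, kleene f n (h z) = kleene g n z).
  { induction n as [|n IH]; intros z; simpl; [reflexivity|].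
    unfold Phi. rewrite Hfg, bind_Tmap. f_equal.
    apply functional_extensionality. intros [y|z']; simpl; auto. }
  intros z. apply (supremum_unique _ (le_antisym Y) (fun n => kleene g n z)).
  - apply (supremum_ext _ (fun n => kleene f n (h z))); [intros n; apply Hk | apply iter_supremum].
  - apply iter_supremum.
Qed.

Lemma iter_codiagonal X Y (f : X -> T ((Y + X) + X)) (x : X) :
  iter X Y (fun x0 => Tmap T eta bind (copair (fun s : Y + X => s) inr) (f x0)) x =
  iter X Y (iter X (Y + X)%type f) x.
Proof.
  set (f1 := fun x0 => Tmap T eta bind (copair (fun s : Y + X => s) inr) (f x0)).
  set (G := iter X (Y + X)%type f).
  set (F := fun (a b : X -> T Y) x0 => bind _ _ (copair (copair (eta Y) a) b) (f x0)).
  set (f2 := fun (a : X -> T Y) x0 => bind (Y + X + X) (Y + X)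
           (copair (fun y => Tmap T eta bind inl (copair (eta Y) a y))
              (fun x' => eta (Y + X) (inr x'))) (f x0)).
  assert (Phi_f1 : forall a x0, Phi T eta bind f1 a x0 = F a a x0).
  { intros a x0. unfold Phi, f1, F. rewrite bind_Tmap. f_equal.
    apply functional_extensionality. intros [[y|x']|x']; reflexivity. }
  assert (Phi_G : forall a x0, Phi T eta bind G a x0 = iter X Y (f2 a) x0).
  { intros a x0. apply iter_naturality. }
  assert (Phi_f2 : forall a b x0, Phi T eta bind (f2 a) b x0 = F a b x0).
  { intros a b x0. unfold Phi, f2, F. rewrite <- bind_bind. f_equal.
    apply functional_extensionality. intros [u|x']; simpl; rewrite ?bind_of_eta; [|reflexivity].
    rewrite bind_Tmap. apply bind_eta. }
  assert (iter_G_fix : forall x0, F (iter X Y G) (iter X Y G) x0 = iter X Y G x0).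
  { assert (E : iter X Y (f2 (iter X Y G)) = iter X Y G).
    { apply functional_extensionality. intros x1. rewrite <- Phi_G. apply iter_fixpoint. }
    intros x0. rewrite <- iter_fixpoint, Phi_G, <- iter_fixpoint, Phi_f2, E. reflexivity. }
  change (iter X Y f1 x = iter X Y G x).
  apply le_antisym; revert x.
  - apply iter_least_prefixpoint. intros x0. rewrite Phi_f1, iter_G_fix. apply le_refl.
  - apply iter_least_prefixpoint. intros x0. rewrite Phi_G.
    apply iter_least_prefixpoint. intros x1. rewrite Phi_f2, <- Phi_f1, iter_fixpoint.
    apply le_refl.
Qed.

Theorem elgot_by_least_fixpoints_of_continuous_monad :
  elgot_by_least_fixpoints T eta bind le.
Proof.
  split; [|split; [|split]].
  - exact (conj bind_eta (conj bind_of_eta bind_bind)).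
  - exact is_sup_exists.
  - exact Phi_continuous.
  - exists iter. split; [exact iter_least_fixpoint|].
    split; [|split; [|split]].
    + intros. apply iter_fixpoint.
    + exact iter_naturality.
    + exact iter_codiagonal.
    + exact iter_uniformity.
Qed.

End KleeneIteration.

Open Scope R_scope.

Lemma nnR_eq (a b : nnR) : nnval a = nnval b -> a = b.
Proof. destruct a, b; simpl; intros ->. f_equal. apply proof_irrelevance. Qed.

Lemma app_exist_congr {P : R -> Prop} {B : Type} (f : {t : R | P t} -> B) t t' p p' :
  t = t' -> f (exist _ t p) = f (exist _ t' p').
Proof. intros ->. f_equal. f_equal. apply proof_irrelevance. Qed.

Lemma inI_ge0 I t : inI I t -> 0 <= t.
Proof. destruct I as [d|[d|]]; simpl; lra. Qed.

Lemma inI_downward I s t : inI I t -> 0 <= s <= t -> inI I s.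
Proof. destruct I as [d|[d|]]; simpl; lra. Qed.

Lemma inI_shiftI (d : nnR) J t :
  inI (shiftI d J) t <-> 0 <= t /\ (t < d \/ inI J (t - d)).
Proof.
  destruct d as [d hd]; destruct J as [[d2 h2]|[[d2 h2]|]]; simpl; split; intros; lra.
Qed.

Lemma intv_ext I I' : (forall t, inI I t <-> inI I' t) -> I = I'.
Proof.
  intros Hx.
  destruct I as [[d hd]|[[d hd]|]], I' as [[d' hd']|[[d' hd']|]]; simpl in Hx.
  - assert (A := proj1 (Hx d) ltac:(lra)). assert (B := proj2 (Hx d') ltac:(lra)).
    f_equal; apply nnR_eq; simpl; lra.
  - assert (A := proj1 (Hx d) ltac:(lra)).
    assert (B := proj2 (Hx ((d + d') / 2)) ltac:(lra)). lra.
  - assert (B := proj2 (Hx (d + 1)) ltac:(lra)). lra.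
  - assert (A := proj2 (Hx d') ltac:(lra)).
    assert (B := proj1 (Hx ((d + d') / 2)) ltac:(lra)). lra.
  - destruct (Rtotal_order d d') as [h|[->|h]].
    + assert (B := proj2 (Hx d) ltac:(lra)). lra.
    + do 2 f_equal. apply nnR_eq; reflexivity.
    + assert (B := proj1 (Hx d') ltac:(lra)). lra.
  - assert (B := proj2 (Hx d) ltac:(lra)). lra.
  - assert (B := proj1 (Hx (d' + 1)) ltac:(lra)). lra.
  - assert (B := proj1 (Hx d') ltac:(lra)). lra.
  - reflexivity.
Qed.

Lemma open_intv_exists_gt k d : inI (IOp k) d -> exists t, d < t /\ inI (IOp k) t.
Proof.
  destruct k as [[d' h']|]; simpl; intros Hd.
  - exists ((d + d') / 2). lra.
  - exists (d + 1). lra.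
Qed.

Lemma sup_gap (P : R -> Prop) m t : is_lub P m -> t < m -> exists s, P s /\ t < s.
Proof.
  intros [Ub Least] Ht. apply NNPP. intros N.
  assert (Ht_ub : is_upper_bound P t).
  { intros s Ps. destruct (Rle_lt_dec s t); auto. exfalso. apply N. eauto. }
  specialize (Least t Ht_ub). lra.
Qed.

Lemma downward_closed_intv (P : R -> Prop) :
  (forall t, P t -> 0 <= t) -> (forall s t, P t -> 0 <= s <= t -> P s) ->
  exists I, forall t, inI I t <-> P t.
Proof.
  intros P_ge0 P_down. destruct (classic (exists t, P t)) as [ne|emp].
  2: { exists (IOp (EFin nn0)). intros t; simpl. split; [lra|]. intros Pt. exfalso; eauto. }
  destruct (classic (bound P)) as [Hb|Hnb].
  - destruct (completeness P Hb ne) as [m Hm].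
    assert (m_ge0 : 0 <= m).
    { destruct ne as [t Pt]. pose proof (P_ge0 t Pt). pose proof (proj1 Hm t Pt). lra. }
    assert (below_m : forall t, 0 <= t < m -> P t).
    { intros t ht. destruct (sup_gap P m t Hm ltac:(lra)) as [s [Ps hs]].
      apply (P_down t s); auto; lra. }
    destruct (classic (P m)) as [Pm|NPm].
    + exists (ICl (mknn m m_ge0)). intros t; simpl. split.
      * intros [h1 h2]. destruct (Req_dec t m) as [->|hne]; auto. apply below_m; lra.
      * intros Pt. split; [apply P_ge0; auto | apply (proj1 Hm); auto].
    + exists (IOp (EFin (mknn m m_ge0))). intros t; simpl. split; [apply below_m|].
      intros Pt. split; [apply P_ge0; auto|]. pose proof (proj1 Hm t Pt).
      destruct (Req_dec t m); [subst; contradiction | lra].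
  - exists (IOp EInf). intros t; simpl. split; [|apply P_ge0].
    intros h. apply NNPP; intros N. apply Hnb. exists t. intros s Ps.
    destruct (Rle_lt_dec s t); auto. exfalso. apply N. apply (P_down t s); auto; lra.
Qed.

Lemma prefix_refl {S} I (e : dom I -> S) : prefix I e I e.
Proof. split; auto. intros; apply app_exist_congr; reflexivity. Qed.

Lemma prefix_trans {S} I1 (e1 : dom I1 -> S) I2 e2 I3 e3 :
  prefix I1 e1 I2 e2 -> prefix I2 e2 I3 e3 -> prefix I1 e1 I3 e3.
Proof.
  intros [Sub12 Agree12] [Sub23 Agree23]. split; auto.
  intros t p p'. rewrite (Agree12 t p (Sub12 t p)). apply Agree23.
Qed.

Lemma prefix_concat {S} (d : nnR) e J (e2 : dom J -> S) :
  prefix (IOp (EFin d)) e (shiftI d J) (concat_fun d e J e2).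
Proof.
  split.
  - intros t Ht. rewrite inI_shiftI. simpl in Ht. lra.
  - intros t p p'. unfold concat_fun; simpl.
    destruct (Rlt_dec t d); [apply app_exist_congr; reflexivity|].
    exfalso. simpl in p. lra.
Qed.

Lemma concat_prefix_mono {S} (d : nnR) e J (e2 : dom J -> S) J' e2' :
  prefix J e2 J' e2' ->
  prefix (shiftI d J) (concat_fun d e J e2) (shiftI d J') (concat_fun d e J' e2').
Proof.
  intros [Sub Agree]. split.
  - intros t. rewrite !inI_shiftI. intuition.
  - intros t p p'. unfold concat_fun; simpl.
    destruct (Rlt_dec t d); [apply app_exist_congr; reflexivity | apply Agree].
Qed.

Lemma HDiv_eq {S X} I (e : dom I -> S) I' e' :
  (forall t, inI I t <-> inI I' t) ->
  (forall t p p', e (exist _ t p) = e' (exist _ t p')) ->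
  @HDiv S X I e = HDiv I' e'.
Proof.
  intros Same Agree. assert (I = I') as <- by (apply intv_ext; auto).
  f_equal. apply functional_extensionality. intros [t p]. apply Agree.
Qed.

Lemma HTerm_eq {S X} (d : nnR) e (d' : nnR) e' (x : X) :
  nnval d = nnval d' ->
  (forall t p p', e (exist _ t p) = e' (exist _ t p')) ->
  @HTerm S X d e x = HTerm d' e' x.
Proof.
  intros Same Agree. assert (d = d') as <- by (apply nnR_eq; auto).
  f_equal. apply functional_extensionality. intros [t p]. apply Agree.
Qed.

Ltac solve_concat :=
  intros; unfold concat_fun; simpl;
  repeat match goal with |- context [Rlt_dec ?a ?b] => destruct (Rlt_dec a b) end;
  repeat match goal with H : inI ?I ?t |- _ =>
    lazymatch goal with _ : 0 <= t |- _ => fail | _ => pose proof (inI_ge0 _ _ H) end end;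
  repeat match goal with d : nnR |- _ =>
    lazymatch goal with _ : 0 <= nnval d |- _ => fail | _ => pose proof (nnval_ge0 d) end end;
  simpl in *;
  first [ apply app_exist_congr; simpl; lra | exfalso; lra
        | exfalso; eapply inI_empty; eassumption ].

Section TrajectoryMonad.
Variable S : Type.

Definition traj_dom {X} (a : H S X) : intv :=
  match a with HTerm d _ _ => IOp (EFin d) | HDiv J _ => J end.

Definition traj {X} (a : H S X) : dom (traj_dom a) -> S :=
  match a as a0 return dom (traj_dom a0) -> S with HTerm _ e _ => e | HDiv _ e => e end.

Definition diverges {X} (a : H S X) : Prop :=
  match a with HTerm _ _ _ => False | HDiv _ _ => True end.

Definition traj_prefix {X} (a b : H S X) : Prop :=
  prefix (traj_dom a) (traj a) (traj_dom b) (traj b).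

Lemma H_le_iff Y (a b : H S Y) : H_le S Y a b <-> a = b \/ (diverges a /\ traj_prefix a b).
Proof. destruct a, b; unfold H_le, traj_prefix; simpl; tauto. Qed.

Lemma H_le_diverges Y (a b : H S Y) : diverges a -> (H_le S Y a b <-> traj_prefix a b).
Proof.
  intros Da. rewrite H_le_iff. split.
  - intros [->|[_ P]]; [apply prefix_refl | exact P].
  - intros P. right. auto.
Qed.

Lemma H_le_refl Y (a : H S Y) : H_le S Y a a.
Proof. left. reflexivity. Qed.

Lemma H_le_trans Y (a b c : H S Y) : H_le S Y a b -> H_le S Y b c -> H_le S Y a c.
Proof.
  rewrite !H_le_iff. intros [->|[Da Pab]]; auto.
  intros [<-|[_ Pbc]]; right; auto. split; [exact Da | eapply prefix_trans; eauto].
Qed.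

Lemma H_le_antisym Y (a b : H S Y) : H_le S Y a b -> H_le S Y b a -> a = b.
Proof.
  rewrite !H_le_iff. intros [->|[Da Pab]]; auto.
  intros [<-|[Db Pba]]; auto.
  destruct a as [|I e]; [contradiction|]. destruct b as [|I' e']; [contradiction|].
  destruct Pab as [Sub Agree], Pba as [Sub' _]. simpl in *.
  apply HDiv_eq; auto. intros t; split; auto.
Qed.

Lemma H_le_terminates Y (a b : H S Y) : ~ diverges a -> H_le S Y a b -> a = b.
Proof. rewrite H_le_iff. intros N [E|[D _]]; tauto. Qed.

Definition H_bot Y : H S Y := HDiv (IOp (EFin nn0)) empty_fun.

Lemma H_bot_le Y (a : H S Y) : H_le S Y (H_bot Y) a.
Proof.
  apply H_le_diverges; [exact I|].
  split; intros t p; exfalso; exact (inI_empty t p).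
Qed.

Definition prepend {Y} (d : nnR) (e : dom (IOp (EFin d)) -> S) (b : H S Y) : H S Y :=
  match b with
  | HTerm d2 e2 y => HTerm (nnadd d d2) (concat_fun d e (IOp (EFin d2)) e2) y
  | HDiv J e2 => HDiv (shiftI d J) (concat_fun d e J e2)
  end.

Lemma H_bind_HTerm X Y (f : X -> H S Y) d e x : H_bind S X Y f (HTerm d e x) = prepend d e (f x).
Proof. simpl. destruct (f x); reflexivity. Qed.

Lemma traj_dom_prepend Y d e (b : H S Y) : traj_dom (prepend d e b) = shiftI d (traj_dom b).
Proof. destruct b; reflexivity. Qed.

Lemma diverges_prepend Y d e (b : H S Y) : diverges (prepend d e b) <-> diverges b.
Proof. destruct b; simpl; tauto. Qed.

Lemma prefix_prepend Y d e (b : H S Y) :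
  prefix (IOp (EFin d)) e (traj_dom (prepend d e b)) (traj (prepend d e b)).
Proof. destruct b as [d2 e2 y|J e2]; exact (prefix_concat d e _ e2). Qed.

Lemma prepend_mono Y d e (b b' : H S Y) :
  H_le S Y b b' -> H_le S Y (prepend d e b) (prepend d e b').
Proof.
  rewrite H_le_iff. intros [->|[Db P]]; [apply H_le_refl|].
  destruct b as [|J e2]; [contradiction|]. apply H_le_diverges; [exact I|].
  destruct b'; apply (concat_prefix_mono d e J e2 _ _ P).
Qed.

Lemma H_bind_eta X (a : H S X) : H_bind S X X (H_eta S X) a = a.
Proof.
  destruct a as [d e x|I e]; [|reflexivity]. simpl.
  apply HTerm_eq; [simpl; lra | solve_concat].
Qed.

Lemma H_bind_of_eta X Y (f : X -> H S Y) (x : X) : H_bind S X Y f (H_eta S X x) = f x.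
Proof.
  simpl. destruct (f x) as [d2 e2 y|J e2].
  - apply HTerm_eq; [simpl; lra | solve_concat].
  - apply HDiv_eq; [|solve_concat].
    intros t. rewrite inI_shiftI. simpl. rewrite Rminus_0_r.
    split; [intros [h0 [h|h]]; [lra | exact h] | intros h; split; [eapply inI_ge0; eauto | right; exact h]].
Qed.

Lemma H_bind_bind X Y Z (f : X -> H S Y) (g : Y -> H S Z) (a : H S X) :
  H_bind S X Z (fun x => H_bind S Y Z g (f x)) a = H_bind S Y Z g (H_bind S X Y f a).
Proof.
  destruct a as [d e x|I e]; [|reflexivity]. simpl.
  destruct (f x) as [d2 e2 y|J e2]; simpl; [|reflexivity].
  destruct (g y) as [d3 e3 z|K e3]; simpl.
  - apply HTerm_eq; [simpl; lra | solve_concat].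
  - apply HDiv_eq; [|solve_concat].
    intros t. rewrite !inI_shiftI. simpl.
    replace (t - (d + d2)) with (t - d - d2) by ring.
    pose proof (nnval_ge0 d). pose proof (nnval_ge0 d2).
    split.
    + intros [h0 [h1|[h1 [h2|h2]]]]; (split; [exact h0|]); [left; lra | left; lra | right; auto].
    + intros [h0 [h1|h1]]; split; auto.
      * destruct (Rlt_dec t d); [left; auto | right; split; [lra | left; lra]].
      * pose proof (inI_ge0 _ _ h1). right. split; [lra | right; auto].
Qed.

Lemma H_bind_mono_r X Y (f : X -> H S Y) a a' :
  H_le S X a a' -> H_le S Y (H_bind S X Y f a) (H_bind S X Y f a').
Proof.
  rewrite H_le_iff. intros [->|[Da P]]; [apply H_le_refl|].
  destruct a as [|J e]; [contradiction|]. apply (H_le_diverges Y (HDiv J e)); [exact I|].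
  destruct a' as [d e' x|I' e']; [|exact P].
  rewrite H_bind_HTerm. eapply prefix_trans; [exact P | apply prefix_prepend].
Qed.

Lemma H_bind_mono_l X Y (f g : X -> H S Y) a :
  (forall x, H_le S Y (f x) (g x)) -> H_le S Y (H_bind S X Y f a) (H_bind S X Y g a).
Proof.
  intros Hfg. destruct a as [d e x|I e]; [|apply H_le_refl].
  rewrite !H_bind_HTerm. apply prepend_mono, Hfg.
Qed.

Lemma chain_terminates_const Y (c : nat -> H S Y) n :
  chain (H_le S Y) c -> ~ diverges (c n) -> forall m, (n <= m)%nat -> c m = c n.
Proof.
  intros Hc Tn m Hnm. induction Hnm as [|m _ IH]; [reflexivity|].
  rewrite <- IH. symmetry. apply H_le_terminates; [rewrite IH; exact Tn | apply Hc].
Qed.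

Lemma supremum_terminates Y (c : nat -> H S Y) n :
  chain (H_le S Y) c -> ~ diverges (c n) -> supremum (H_le S Y) c (c n).
Proof.
  intros Hc Tn. apply supremum_max. intros m. destruct (Nat.le_ge_cases m n).
  - apply (chain_le _ (H_le_refl Y) (H_le_trans Y)); assumption.
  - rewrite (chain_terminates_const Y c n Hc Tn m); [apply H_le_refl | assumption].
Qed.

Lemma supremum_of_cover Y (c : nat -> H S Y) s :
  diverges s -> (forall n, H_le S Y (c n) s) ->
  (forall t, inI (traj_dom s) t -> exists n, diverges (c n) /\ inI (traj_dom (c n)) t) ->
  supremum (H_le S Y) c s.
Proof.
  intros Ds Ub Cover. split; [exact Ub|]. intros h Hh. apply H_le_diverges; [exact Ds|]. split.
  - intros t Ht. destruct (Cover t Ht) as [n [Dn Hn]].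
    exact (proj1 (proj1 (H_le_diverges _ _ _ Dn) (Hh n)) t Hn).
  - intros t p p'. destruct (Cover t p) as [n [Dn q]].
    rewrite <- (proj2 (proj1 (H_le_diverges _ _ _ Dn) (Ub n)) t q p).
    apply (proj2 (proj1 (H_le_diverges _ _ _ Dn) (Hh n))).
Qed.

Lemma chain_traj_agree Y (c : nat -> H S Y) :
  chain (H_le S Y) c -> (forall n, diverges (c n)) ->
  forall n m t p q, traj (c n) (exist _ t p) = traj (c m) (exist _ t q).
Proof.
  intros Hc D n m t p q.
  assert (Hle : forall i j, (i <= j)%nat -> traj_prefix (c i) (c j)).
  { intros i j Hij. apply H_le_diverges; [apply D|].
    apply (chain_le _ (H_le_refl Y) (H_le_trans Y)); assumption. }
  destruct (Nat.le_ge_cases n m) as [h|h].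
  - apply (proj2 (Hle _ _ h)).
  - symmetry. apply (proj2 (Hle _ _ h)).
Qed.

(* The supremum is the union of the trajectories; its domain is an interval by completeness of R. *)
Lemma supremum_diverges_exists Y (c : nat -> H S Y) :
  chain (H_le S Y) c -> (forall n, diverges (c n)) ->
  exists s, diverges s /\ supremum (H_le S Y) c s /\
    (forall t, inI (traj_dom s) t <-> exists n, inI (traj_dom (c n)) t).
Proof.
  intros Hc D.
  destruct (downward_closed_intv (fun t => exists n, inI (traj_dom (c n)) t)) as [U HU].
  { intros t [n h]. eapply inI_ge0; eauto. }
  { intros s t [n h] hs. exists n. eapply inI_downward; eauto. }
  set (E := fun (p : dom U) =>
     let w := constructive_indefinite_description _ (proj1 (HU (proj1_sig p)) (proj2_sig p)) in
     traj (c (proj1_sig w)) (exist _ (proj1_sig p) (proj2_sig w))).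
  assert (Ub : forall n, H_le S Y (c n) (HDiv U E)).
  { intros n. apply H_le_diverges; [apply D|]. split.
    - intros t Ht. apply HU. eauto.
    - intros t p p'. unfold E. simpl.
      destruct (constructive_indefinite_description _ _) as [m q].
      apply chain_traj_agree; auto. }
  exists (HDiv U E). split; [exact I|]. split; [|exact HU].
  apply supremum_of_cover; [exact I | exact Ub |].
  intros t Ht. destruct (proj1 (HU t) Ht) as [n Hn]. eauto.
Qed.

Lemma H_supremum_cases Y (c : nat -> H S Y) s :
  chain (H_le S Y) c -> supremum (H_le S Y) c s ->
  (exists n, ~ diverges (c n) /\ s = c n) \/
  ((forall n, diverges (c n)) /\ diverges s /\
     (forall t, inI (traj_dom s) t <-> exists n, inI (traj_dom (c n)) t)).
Proof.
  intros Hc Hs. destruct (classic (forall n, diverges (c n))) as [D|ND].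
  - right. destruct (supremum_diverges_exists Y c Hc D) as [u [Du [Hu Cu]]].
    rewrite (supremum_unique _ (H_le_antisym Y) c s u Hs Hu). auto.
  - left. apply not_all_ex_not in ND as [n Tn]. exists n. split; [exact Tn|].
    exact (supremum_unique _ (H_le_antisym Y) c s (c n) Hs (supremum_terminates Y c n Hc Tn)).
Qed.

Lemma H_supremum_exists Y (c : nat -> H S Y) :
  chain (H_le S Y) c -> exists s, supremum (H_le S Y) c s.
Proof.
  intros Hc. destruct (classic (forall n, diverges (c n))) as [D|ND].
  - destruct (supremum_diverges_exists Y c Hc D) as [s [_ [Hs _]]]. eauto.
  - apply not_all_ex_not in ND as [n Tn]. exists (c n). apply supremum_terminates; auto.
Qed.

Lemma supremum_map_terminates X Y (F : H S X -> H S Y) (c : nat -> H S X) n :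
  (forall a b, H_le S X a b -> H_le S Y (F a) (F b)) ->
  chain (H_le S X) c -> ~ diverges (c n) ->
  supremum (H_le S Y) (fun m => F (c m)) (F (c n)).
Proof.
  intros F_mono Hc Tn. apply (supremum_max _ (fun m => F (c m)) n). intros m.
  apply F_mono, (supremum_terminates X c n Hc Tn).
Qed.

Lemma prepend_continuous Y d e (b : nat -> H S Y) s :
  chain (H_le S Y) b -> supremum (H_le S Y) b s ->
  supremum (H_le S Y) (fun n => prepend d e (b n)) (prepend d e s).
Proof.
  intros Hb Hs. destruct (H_supremum_cases Y b s Hb Hs) as [[n [Tn ->]]|[D [Ds Dom]]].
  - apply supremum_map_terminates; [apply prepend_mono | exact Hb | exact Tn].
  - apply supremum_of_cover.
    + apply diverges_prepend, Ds.
    + intros n. apply prepend_mono, Hs.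
    + intros t. rewrite traj_dom_prepend, inI_shiftI. intros [h0 [h1|h1]].
      * exists O. rewrite diverges_prepend, traj_dom_prepend, inI_shiftI. auto.
      * destruct (proj1 (Dom _) h1) as [n Hn]. exists n.
        rewrite diverges_prepend, traj_dom_prepend, inI_shiftI. auto.
Qed.

Lemma H_bind_continuous_r X Y (f : X -> H S Y) (c : nat -> H S X) s :
  chain (H_le S X) c -> supremum (H_le S X) c s ->
  supremum (H_le S Y) (fun n => H_bind S X Y f (c n)) (H_bind S X Y f s).
Proof.
  intros Hc Hs. destruct (H_supremum_cases X c s Hc Hs) as [[n [Tn ->]]|[D [Ds Dom]]].
  - apply supremum_map_terminates; [apply H_bind_mono_r | exact Hc | exact Tn].
  - destruct s as [|J e]; [contradiction|].
    apply supremum_of_cover; [exact I | intros n; apply H_bind_mono_r, Hs |].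
    intros t Ht. destruct (proj1 (Dom t) Ht) as [n Hn]. exists n.
    specialize (D n). destruct (c n) as [|J' e']; [contradiction | split; [exact I | exact Hn]].
Qed.

Lemma H_bind_continuous_l X Y (k : nat -> X -> H S Y) (K : X -> H S Y) a :
  (forall x, chain (H_le S Y) (fun n => k n x)) ->
  (forall x, supremum (H_le S Y) (fun n => k n x) (K x)) ->
  supremum (H_le S Y) (fun n => H_bind S X Y (k n) a) (H_bind S X Y K a).
Proof.
  intros Hk HK. destruct a as [d e x|J e].
  - rewrite H_bind_HTerm.
    apply (supremum_ext _ (fun n => prepend d e (k n x))); [intros n; symmetry; apply H_bind_HTerm|].
    apply prepend_continuous; auto.
  - exact (supremum_const _ (H_le_refl Y) (HDiv J e)).
Qed.

End TrajectoryMonad.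

Theorem H_elgot (S : Type) : elgot_by_least_fixpoints (H S) (H_eta S) (H_bind S) (H_le S).
Proof.
  apply (elgot_by_least_fixpoints_of_continuous_monad _ _ _ _ (H_bot S)).
  - exact (H_bind_eta S).
  - exact (H_bind_of_eta S).
  - exact (H_bind_bind S).
  - exact (H_le_refl S).
  - exact (H_le_trans S).
  - exact (H_le_antisym S).
  - exact (H_bot_le S).
  - exact (H_supremum_exists S).
  - reflexivity.
  - exact (H_bind_mono_l S).
  - exact (H_bind_continuous_r S).
  - exact (H_bind_continuous_l S).
Qed.

Section OpenTrajectoryMonad.
Variable S : Type.

Definition Hp_to_H {X} (a : Hp S X) : H S X :=
  match a with HpTerm d e x => HTerm d e x | HpDiv k e => HDiv (IOp k) e end.

(* Closed-interval trajectories lie outside the image of [Hp_to_H] and get an arbitrary value. *)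
Definition H_to_Hp {X} (a : H S X) : Hp S X :=
  match a with
  | HTerm d e x => HpTerm d e x
  | HDiv (IOp k) e => HpDiv k e
  | HDiv (ICl _) _ => HpDiv (EFin nn0) empty_fun
  end.

Lemma Hp_to_HK X (a : Hp S X) : H_to_Hp (Hp_to_H a) = a.
Proof. destruct a; reflexivity. Qed.

Lemma Hp_to_H_inj X (a b : Hp S X) : Hp_to_H a = Hp_to_H b -> a = b.
Proof. intros E. rewrite <- (Hp_to_HK X a), <- (Hp_to_HK X b), E. reflexivity. Qed.

Lemma Hp_to_H_bind X Y (f : X -> Hp S Y) a :
  Hp_to_H (Hp_bind S X Y f a) = H_bind S X Y (fun x => Hp_to_H (f x)) (Hp_to_H a).
Proof. destruct a as [d e x|k e]; simpl; [destruct (f x)|]; reflexivity. Qed.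

Lemma Hp_le_iff Y (a b : Hp S Y) : Hp_le S Y a b <-> H_le S Y (Hp_to_H a) (Hp_to_H b).
Proof.
  unfold Hp_le, H_le. split.
  - intros [->|P]; [left; reflexivity | right; destruct a, b; exact P].
  - intros [E|P]; [left; apply Hp_to_H_inj, E | right; destruct a, b; exact P].
Qed.

Lemma Hp_bind_eta X (a : Hp S X) : Hp_bind S X X (Hp_eta S X) a = a.
Proof. apply Hp_to_H_inj. rewrite Hp_to_H_bind. apply H_bind_eta. Qed.

Lemma Hp_bind_of_eta X Y (f : X -> Hp S Y) (x : X) : Hp_bind S X Y f (Hp_eta S X x) = f x.
Proof.
  apply Hp_to_H_inj. rewrite Hp_to_H_bind. exact (H_bind_of_eta S X Y (fun x => Hp_to_H (f x)) x).
Qed.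

Lemma Hp_bind_bind X Y Z (f : X -> Hp S Y) (g : Y -> Hp S Z) (a : Hp S X) :
  Hp_bind S X Z (fun x => Hp_bind S Y Z g (f x)) a = Hp_bind S Y Z g (Hp_bind S X Y f a).
Proof.
  apply Hp_to_H_inj. rewrite !Hp_to_H_bind, <- H_bind_bind. f_equal.
  apply functional_extensionality. intros x. apply Hp_to_H_bind.
Qed.

Lemma Hp_le_refl Y (a : Hp S Y) : Hp_le S Y a a.
Proof. left. reflexivity. Qed.

Lemma Hp_le_trans Y (a b c : Hp S Y) : Hp_le S Y a b -> Hp_le S Y b c -> Hp_le S Y a c.
Proof. rewrite !Hp_le_iff. apply H_le_trans. Qed.

Lemma Hp_le_antisym Y (a b : Hp S Y) : Hp_le S Y a b -> Hp_le S Y b a -> a = b.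
Proof. rewrite !Hp_le_iff. intros Hab Hba. apply Hp_to_H_inj, H_le_antisym; assumption. Qed.

Definition Hp_bot Y : Hp S Y := HpDiv (EFin nn0) empty_fun.

Lemma Hp_bot_le Y (a : Hp S Y) : Hp_le S Y (Hp_bot Y) a.
Proof. apply Hp_le_iff, H_bot_le. Qed.

Lemma Hp_bind_mono_l X Y (f g : X -> Hp S Y) a :
  (forall x, Hp_le S Y (f x) (g x)) -> Hp_le S Y (Hp_bind S X Y f a) (Hp_bind S X Y g a).
Proof.
  intros Hfg. rewrite Hp_le_iff, !Hp_to_H_bind.
  apply H_bind_mono_l. intros x. apply Hp_le_iff, Hfg.
Qed.

Lemma chain_Hp_to_H Y (c : nat -> Hp S Y) :
  chain (Hp_le S Y) c -> chain (H_le S Y) (fun n => Hp_to_H (c n)).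
Proof. intros Hc n. apply Hp_le_iff, Hc. Qed.

Lemma supremum_Hp_of_H Y (c : nat -> Hp S Y) s :
  supremum (H_le S Y) (fun n => Hp_to_H (c n)) (Hp_to_H s) -> supremum (Hp_le S Y) c s.
Proof.
  intros [Ub Least]. split.
  - intros n. apply Hp_le_iff, Ub.
  - intros h Hh. apply Hp_le_iff, Least. intros n. apply Hp_le_iff, Hh.
Qed.

(* A union of intervals [0,d_n) is never a closed interval [0,d]. *)
Lemma supremum_Hp_to_H_open Y (c : nat -> Hp S Y) s :
  chain (Hp_le S Y) c -> supremum (H_le S Y) (fun n => Hp_to_H (c n)) s ->
  s = Hp_to_H (H_to_Hp s).
Proof.
  intros Hc Hs.
  destruct (H_supremum_cases S Y _ s (chain_Hp_to_H Y c Hc) Hs)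
    as [[n [_ ->]]|[D [Ds Dom]]]; [rewrite Hp_to_HK; reflexivity|].
  destruct s as [|[d|k] e]; [contradiction | exfalso | reflexivity].
  simpl in Dom. destruct (proj1 (Dom d)) as [n Hn]; [pose proof (nnval_ge0 d); lra|].
  assert (Open : exists k, traj_dom S (Hp_to_H (c n)) = IOp k) by (destruct (c n); simpl; eauto).
  destruct Open as [k Hk]. rewrite Hk in Hn.
  destruct (open_intv_exists_gt k d Hn) as [t [Hdt Ht]].
  assert (Hle : 0 <= t <= d) by (apply Dom; exists n; rewrite Hk; exact Ht).
  lra.
Qed.

Lemma Hp_supremum_exists Y (c : nat -> Hp S Y) :
  chain (Hp_le S Y) c -> exists s, supremum (Hp_le S Y) c s.
Proof.
  intros Hc. destruct (H_supremum_exists S Y _ (chain_Hp_to_H Y c Hc)) as [s Hs].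
  exists (H_to_Hp s). apply supremum_Hp_of_H.
  rewrite <- (supremum_Hp_to_H_open Y c s Hc Hs). exact Hs.
Qed.

Lemma supremum_Hp_to_H Y (c : nat -> Hp S Y) s :
  chain (Hp_le S Y) c -> supremum (Hp_le S Y) c s ->
  supremum (H_le S Y) (fun n => Hp_to_H (c n)) (Hp_to_H s).
Proof.
  intros Hc Hs. destruct (H_supremum_exists S Y _ (chain_Hp_to_H Y c Hc)) as [s' Hs'].
  assert (Open := supremum_Hp_to_H_open Y c s' Hc Hs').
  assert (Hs'p : supremum (Hp_le S Y) c (H_to_Hp s')).
  { apply supremum_Hp_of_H. rewrite <- Open. exact Hs'. }
  rewrite <- (supremum_unique _ (Hp_le_antisym Y) c _ _ Hs'p Hs), <- Open. exact Hs'.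
Qed.

Lemma Hp_bind_continuous_r X Y (f : X -> Hp S Y) (c : nat -> Hp S X) s :
  chain (Hp_le S X) c -> supremum (Hp_le S X) c s ->
  supremum (Hp_le S Y) (fun n => Hp_bind S X Y f (c n)) (Hp_bind S X Y f s).
Proof.
  intros Hc Hs. apply supremum_Hp_of_H. rewrite Hp_to_H_bind.
  eapply supremum_ext; [intros n; symmetry; apply Hp_to_H_bind|].
  apply H_bind_continuous_r; [apply chain_Hp_to_H | apply supremum_Hp_to_H]; assumption.
Qed.

Lemma Hp_bind_continuous_l X Y (k : nat -> X -> Hp S Y) (K : X -> Hp S Y) a :
  (forall x, chain (Hp_le S Y) (fun n => k n x)) ->
  (forall x, supremum (Hp_le S Y) (fun n => k n x) (K x)) ->
  supremum (Hp_le S Y) (fun n => Hp_bind S X Y (k n) a) (Hp_bind S X Y K a).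
Proof.
  intros Hk HK. apply supremum_Hp_of_H. rewrite Hp_to_H_bind.
  eapply supremum_ext; [intros n; symmetry; apply Hp_to_H_bind|].
  apply (H_bind_continuous_l S X Y (fun n x => Hp_to_H (k n x))).
  - intros x. exact (chain_Hp_to_H Y (fun n => k n x) (Hk x)).
  - intros x. exact (supremum_Hp_to_H Y (fun n => k n x) (K x) (Hk x) (HK x)).
Qed.

End OpenTrajectoryMonad.

Theorem Hp_elgot (S : Type) : elgot_by_least_fixpoints (Hp S) (Hp_eta S) (Hp_bind S) (Hp_le S).
Proof.
  apply (elgot_by_least_fixpoints_of_continuous_monad _ _ _ _ (Hp_bot S)).
  - exact (Hp_bind_eta S).
  - exact (Hp_bind_of_eta S).
  - exact (Hp_bind_bind S).
  - exact (Hp_le_refl S).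
  - exact (Hp_le_trans S).
  - exact (Hp_le_antisym S).
  - exact (Hp_bot_le S).
  - exact (Hp_supremum_exists S).
  - reflexivity.
  - exact (Hp_bind_mono_l S).
  - exact (Hp_bind_continuous_r S).
  - exact (Hp_bind_continuous_l S).
Qed.

Theorem theorem2 (S : Type) :
  elgot_by_least_fixpoints (Hp S) (Hp_eta S) (Hp_bind S) (Hp_le S) /\
  elgot_by_least_fixpoints (H S) (H_eta S) (H_bind S) (H_le S).
Proof. split; [apply Hp_elgot | apply H_elgot]. Qed.
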